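(* Let $0<q<1$, $Q=1/q$. For every $n\ge2$, \[ F_n=\sum_{k=2}^n\binom nk(-1)^k\left[\frac{k-1}{Q^{k-1}-1}-\frac{k}{Q^k-1}\right], \] where $F_n$ is the expected number of letters strictly to the left of the last left-to-right maximum (i.e. of the first occurrence of the maximal letter) in a random word of length $n$.
   Context: Words $a_1\dots a_n$ have independent letters with $\mathbb P\{a_i=k\}=pq^{k-1}$, $k\ge1$, $p=1-q$. An index $i$ is a left-to-right maximum if $a_i>a_j$ for all $j<i$; the last left-to-right maximum is the index of the first occurrence of $\max_j a_j$. *)

From mathcomp Require Import all_boot all_order all_algebra.
From mathcomp Require Import all_classical all_reals all_analysis.
Set Implicit Arguments. Unset Strict Implicit. Unset Printing Implicit Defensive.
Import Order.TTheory GRing.Theory Num.Theory.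
Local Open Scope classical_set_scope.
Local Open Scope ring_scope.

Definition pos_word (n : nat) : set (n.-tuple nat) :=
  [set w | all (fun a => 0 < a)%N w].

(* Probability of a word: independent letters, P{a_i = k} = p q^(k-1), p = 1-q. *)
Definition word_prob (R : realType) (q : R) (n : nat) (w : n.-tuple nat) : R :=
  \prod_(a <- w) ((1 - q) * q ^+ a.-1).

(* Position (0-based) of the last left-to-right maximum, i.e. of the first
   occurrence of the maximal letter; it equals the number of letters strictly
   to its left. *)
Definition last_lrmax (n : nat) (w : n.-tuple nat) : nat :=
  index (\max_(a <- w) a)%N w.

Definition F_exp (R : realType) (q : R) (n : nat) : \bar R :=
  \esum_(w in @pos_word n) ((word_prob q w * (last_lrmax w)%:R)%:E).

(* Truncate the letters to 1..M.  Fixing the value m of the maximum and peeling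
   off the first letter (it is the leftmost maximum iff it is at least the
   maximum of the rest; otherwise it shifts the position by one) gives a
   recursion in the length, solved explicitly in t = q^m.  The solution splits
   into sum_k C(n,k)(-1)^k ((k-1) t^(k-1) - k t^k), whose sum over m is a
   combination of geometric series in q^j, plus a term telescoping in m.  As
   M -> oo the truncated sums exhaust the nonnegative series defining F_n and
   tend to sum_k C(n,k)(-1)^k ((k-1)/(1-q^(k-1)) - k/(1-q^k)) + n - 1; the
   identity 1/(1-q^j) = 1/(Q^j-1) + 1 turns this into the stated formula. *)

From mathcomp Require Import all_boot all_order all_algebra.
From mathcomp Require Import all_classical all_reals all_analysis.
From mathcomp Require Import ring.
Set Implicit Arguments. Unset Strict Implicit. Unset Printing Implicit Defensive.
Import Order.TTheory GRing.Theory Num.Theory.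
Import numFieldNormedType.Exports.
Local Open Scope ring_scope.

Definition wmax (s : seq nat) : nat := (\max_(a <- s) a)%N.
Definition lrmax_pos (s : seq nat) : nat := index (wmax s) s.

Fixpoint box_words (n M : nat) : seq (seq nat) :=
  if n is n'.+1 then [seq x :: w | x <- iota 1 M, w <- box_words n' M]
  else [:: [::]].

Lemma wmax_cons x w : wmax (x :: w) = maxn x (wmax w).
Proof. by rewrite /wmax big_cons. Qed.

Lemma lrmax_pos_cons x w :
  lrmax_pos (x :: w) = if (wmax w <= x)%N then 0%N else (lrmax_pos w).+1.
Proof.
rewrite /lrmax_pos wmax_cons.
by case: leqP => [|lt_x]; rewrite /= ?eqxx ?ltn_eqF.
Qed.

Lemma mem_box_words n M w :
  (w \in box_words n M) =
  [&& size w == n, all (fun a => 0 < a)%N w & (wmax w <= M)%N].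
Proof.
elim: n w => [|n IH] [|x w] /=; rewrite ?inE //.
- by rewrite /wmax big_nil.
- by apply/negbTE/negP => /allpairsPdep[? [? []]].
rewrite wmax_cons geq_max eqSS; apply/allpairsPdep/idP.
  move=> [y [v [y_in v_in [-> ->]]]]; move: y_in v_in.
  by rewrite mem_iota add1n ltnS IH => /andP[-> ->] /and3P[-> -> ->].
move=> /and4P[size_w /andP[pos_x pos_w] x_le le_w]; exists x, w.
by rewrite mem_iota add1n ltnS pos_x x_le IH size_w pos_w le_w.
Qed.

Lemma uniq_box_words n M : uniq (box_words n M).
Proof.
elim: n => [|n IH] //=; apply: allpairs_uniq => //; first exact: iota_uniq.
by move=> [x1 w1] [x2 w2] _ _ /= [-> ->].
Qed.

Lemma sum_nat_indicator {R : pzSemiRingType} (F : nat -> R) a n : (a < n)%N ->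
  \sum_(0 <= m < n) F m * (a == m)%:R = F a.
Proof.
move=> lt_an; rewrite (eq_bigr (fun m => if m == a then F m else 0)).
  by rewrite -big_mkcond big_nat1_eq lt_an.
by move=> m _; rewrite eq_sym; case: eqP; rewrite ?mulr1 ?mulr0.
Qed.

Section WordWeights.
Variables (R : comPzRingType) (q : R).

Definition letter_wt (a : nat) : R := (1 - q) * q ^+ a.-1.
Definition word_wt (s : seq nat) : R := \prod_(a <- s) letter_wt a.

Lemma word_wt_cons x w : word_wt (x :: w) = letter_wt x * word_wt w.
Proof. by rewrite /word_wt big_cons. Qed.

Lemma big_box_words_cons n M (F : seq nat -> R) :
  \sum_(w <- box_words n.+1 M) F w =
  \sum_(x <- iota 1 M) \sum_(w <- box_words n M) F (x :: w).
Proof. exact: big_allpairs_dep. Qed.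

Lemma sum_letter_wt_leq M k :
  \sum_(x <- iota 1 M) letter_wt x * (x <= k)%:R = 1 - q ^+ minn k M.
Proof.
elim: M => [|M IH]; first by rewrite big_nil minn0 expr0 subrr.
rewrite -[M.+1]addn1 iotaD big_cat big_seq1 IH add1n addn1 /letter_wt /=.
case: (leqP M.+1 k) => [le_Mk | lt_kM].
  by rewrite (minn_idPr (ltnW le_Mk)) mulr1 exprS; ring.
by rewrite ltnS in lt_kM; rewrite mulr0 addr0 (minn_idPl lt_kM).
Qed.

Lemma sum_word_wt_wmax_leq n M k :
  \sum_(w <- box_words n M) word_wt w * (wmax w <= k)%:R =
  (1 - q ^+ minn k M) ^+ n.
Proof.
elim: n => [|n IH]; first by rewrite big_seq1 /word_wt /wmax !big_nil mul1r.
rewrite big_box_words_cons exprS -IH -sum_letter_wt_leq big_distrl /=.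
apply: eq_bigr => x _; rewrite big_distrr /=; apply: eq_bigr => w _.
by rewrite word_wt_cons wmax_cons geq_max -mulnb natrM; ring.
Qed.

(* At m = 0 only the empty word contributes, whence the value 0 ^+ n. *)
Definition wmax_mass n m : R :=
  (1 - q ^+ m) ^+ n - (if m is m'.+1 then (1 - q ^+ m') ^+ n else 0).

Lemma sum_word_wt_wmax n M (phi : nat -> R) :
  \sum_(w <- box_words n M) word_wt w * phi (wmax w) =
  \sum_(0 <= m < M.+1) phi m * wmax_mass n m.
Proof.
have eq_leqB a m : ((a == m)%:R : R) =
    (a <= m)%:R - (if m is m'.+1 then (a <= m')%:R else 0).
  case: m => [|m]; first by rewrite leqn0 subr0.
  by case: (ltngtP a m.+1) => [lt_am | lt_ma | ->]; rewrite ?ltnn ?subr0 //;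
    [rewrite -ltnS lt_am subrr | rewrite leqNgt (ltnW lt_ma) subr0].
transitivity (\sum_(w <- box_words n M) \sum_(0 <= m < M.+1)
    phi m * (word_wt w * (wmax w == m)%:R)).
  rewrite big_seq [RHS]big_seq; apply: eq_bigr => w.
  rewrite mem_box_words => /and3P[_ _ le_wM].
  under eq_bigr do rewrite mulrA.
  by rewrite (sum_nat_indicator (fun m => phi m * word_wt w)) 1?mulrC.
rewrite exchange_big /=; rewrite big_nat [RHS]big_nat; apply: eq_bigr => m.
rewrite ltnS => /andP[_ le_mM]; rewrite -mulr_sumr; congr (_ * _).
under eq_bigr do rewrite eq_leqB mulrBr.
rewrite sumrB sum_word_wt_wmax_leq (minn_idPl le_mM) /wmax_mass.
case: m le_mM => [|m] le_mM.
  by rewrite big1 ?subr0 // => w _; rewrite mulr0.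
by rewrite sum_word_wt_wmax_leq (minn_idPl (ltnW le_mM)).
Qed.

(* The [word_wt]-weighted sum of [lrmax_pos] over the words of length n with
   maximum m, see [sum_word_wt_lrmax_pos]. *)
Fixpoint pos_mass n m : R :=
  if n is n'.+1 then (1 - q ^+ m.-1) * (pos_mass n' m + wmax_mass n' m) else 0.

Lemma pos_mass_at0 n : pos_mass n 0 = 0.
Proof. by case: n => //= n; rewrite expr0 subrr mul0r. Qed.

Lemma sum_word_wt_lrmax_pos n M (phi : nat -> R) :
  \sum_(w <- box_words n M) word_wt w * (lrmax_pos w)%:R * phi (wmax w) =
  \sum_(0 <= m < M.+1) phi m * pos_mass n m.
Proof.
elim: n phi => [|n IH] phi.
  by rewrite big_seq1 /lrmax_pos /= mulr0 mul0r big1 // => m _; rewrite mulr0.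
have leq_pred_ltn x k : (0 < x)%N -> (x <= k.-1)%N = (x < k)%N.
  by case: k => //; case: x.
pose psi m := phi m * (1 - q ^+ m.-1).
transitivity (\sum_(w <- box_words n M)
    word_wt w * ((lrmax_pos w)%:R + 1) * psi (wmax w)).
  rewrite big_box_words_cons exchange_big big_seq [RHS]big_seq.
  apply: eq_bigr => w; rewrite mem_box_words => /and3P[_ _ le_wM].
  rewrite /psi -(minn_idPl (leq_trans (leq_pred _) le_wM)) -sum_letter_wt_leq.
  rewrite !big_distrr big_seq [RHS]big_seq /=; apply: eq_bigr => x.
  rewrite mem_iota => /andP[pos_x _].
  rewrite word_wt_cons lrmax_pos_cons wmax_cons leq_pred_ltn //.
  case: leqP => [le_wx | lt_xw]; first by rewrite !mulr0 !mul0r.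
  by rewrite -addn1 natrD mulr1; ring.
under eq_bigr do rewrite mulrDr mulr1 mulrDl.
rewrite big_split /= IH sum_word_wt_wmax -big_split /=.
by apply: eq_bigr => m _; rewrite /psi /=; ring.
Qed.

Lemma sum_word_wt_lrmax_pos1 n M :
  \sum_(w <- box_words n M) word_wt w * (lrmax_pos w)%:R =
  \sum_(0 <= m < M) pos_mass n m.+1.
Proof.
under eq_bigr do rewrite -[_ * _]mulr1.
rewrite (sum_word_wt_lrmax_pos n M (fun=> 1)) big_nat_recl // pos_mass_at0.
by rewrite mul1r add0r; under eq_bigr do rewrite mul1r.
Qed.

Lemma pos_mass_closed n m :
  (1 - q) * q ^+ m * pos_mass n m.+1 =
  (1 - q ^+ m) * ((1 - q ^+ m.+1) ^+ n - (1 - q ^+ m) ^+ n)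
  - n%:R * (1 - q) * q ^+ m * (1 - q ^+ m) ^+ n.
Proof.
elim: n => [|n IH]; first by rewrite /= !expr0 subrr; ring.
rewrite /= /wmax_mass -/(pos_mass n m.+1); move: IH; rewrite !exprS mulrSr.
set t := q ^+ m => IH.
transitivity ((1 - t) * ((1 - q) * t * pos_mass n m.+1
    + (1 - q) * t * ((1 - q * t) ^+ n - (1 - t) ^+ n))); first by ring.
by rewrite IH; ring.
Qed.

End WordWeights.

Lemma word_wt_ge0 (R : numDomainType) (q : R) s :
  0 <= q -> q <= 1 -> 0 <= word_wt q s.
Proof.
move=> q_ge0 q_le1; apply: prodr_ge0 => a _.
by rewrite mulr_ge0 ?exprn_ge0 // subr_ge0.
Qed.

Section BinomialSums.
Variable R : comPzRingType.

Definition binom_diff_sum n (g : nat -> R) : R :=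
  \sum_(2 <= k < n.+1)
    'C(n, k)%:R * (-1) ^+ k * ((k.-1)%:R * g k.-1 - k%:R * g k).

Lemma eq_binom_diff_sum n (g h : nat -> R) :
  (forall j, (0 < j)%N -> g j = h j) -> binom_diff_sum n g = binom_diff_sum n h.
Proof. by move=> gh; apply: eq_big_nat => -[|[|k]] // _; rewrite !gh. Qed.

Lemma sum_binom_sign_pow n (y : R) :
  \sum_(0 <= k < n.+1) 'C(n, k)%:R * (-1) ^+ k * y ^+ k = (1 - y) ^+ n.
Proof.
rewrite exprBn big_mkord; apply: eq_bigr => k _.
by rewrite expr1n mulr1 mulr_natl mulrnAl.
Qed.

Lemma sum_binom_sign_mul_pow n (y : R) :
  \sum_(0 <= k < n.+2) 'C(n.+1, k)%:R * (-1) ^+ k * k%:R * y ^+ k =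
  - n.+1%:R * y * (1 - y) ^+ n.
Proof.
rewrite big_nat_recl // mulr0 mul0r add0r -(sum_binom_sign_pow n y) mulr_sumr.
apply: eq_bigr => k _.
have binS : ('C(n.+1, k.+1) * k.+1 = n.+1 * 'C(n, k))%N.
  by rewrite mulnC -mul_bin_diag.
transitivity (('C(n.+1, k.+1) * k.+1)%:R * (-1) ^+ k.+1 * y ^+ k.+1 : R).
  by rewrite natrM; ring.
by rewrite binS natrM !exprS; ring.
Qed.

Lemma mulr_binom_diff_sum_pow n (t : R) :
  t * binom_diff_sum n (fun j => t ^+ j) =
  1 - (1 - t) ^+ n - n%:R * t * (1 - t) ^+ n - n%:R * t ^+ 2.
Proof.
case: n => [|n]; first by rewrite /binom_diff_sum big_geq // mulr0 expr0; ring.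
set SA := \sum_(2 <= k < n.+2) 'C(n.+1, k)%:R * (-1) ^+ k * k%:R * t ^+ k.
set SB := \sum_(2 <= k < n.+2) 'C(n.+1, k)%:R * (-1) ^+ k * t ^+ k.
have -> : t * binom_diff_sum n.+1 (fun j => t ^+ j) = SA - SB - t * SA.
  rewrite /binom_diff_sum /SA /SB !mulr_sumr -!sumrB.
  apply: eq_big_nat => -[|[|k]] // _.
  by rewrite -[k.+2.-1]/k.+1 [t ^+ k.+2]exprS [k.+2%:R]mulrSr; ring.
have := sum_binom_sign_mul_pow n t; rewrite big_ltn // big_ltn // -/SA => SAE.
have := sum_binom_sign_pow n.+1 t; rewrite big_ltn // big_ltn // -/SB => SBE.
have -> : SA = - n.+1%:R * t * (1 - t) ^+ n + n.+1%:R * t.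
  by rewrite -SAE bin1 expr1; ring.
have -> : SB = (1 - t) ^+ n.+1 - 1 + n.+1%:R * t.
  by rewrite -SBE bin0 bin1 expr0 expr1; ring.
by rewrite exprS; ring.
Qed.

Lemma sum_binom_sign n : (0 < n)%N ->
  \sum_(2 <= k < n.+1) 'C(n, k)%:R * (-1) ^+ k = n%:R - 1 :> R.
Proof.
move=> n_gt0; have := sum_binom_sign_pow n 1.
rewrite subrr expr0n gtn_eqF // big_ltn // big_ltn ?ltnS // bin0 bin1.
under eq_bigr do rewrite expr1n mulr1.
set S := \sum_(2 <= k < n.+1) _ => sum_sign.
have : S - (n%:R - 1) = false%:R by rewrite -sum_sign; ring.
by move/eqP; rewrite subr_eq0 => /eqP.
Qed.

Lemma binom_diff_sum_add1 n (g : nat -> R) : (0 < n)%N ->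
  binom_diff_sum n (fun j => g j + 1) = binom_diff_sum n g - (n%:R - 1).
Proof.
move=> n_gt0; rewrite -sum_binom_sign // /binom_diff_sum -sumrB.
apply: eq_big_nat => -[|[|k]] // _.
by rewrite -[k.+2.-1]/k.+1 [k.+2%:R]mulrSr; ring.
Qed.

Lemma sum_binom_diff_sum n M (g : nat -> nat -> R) :
  \sum_(0 <= m < M) binom_diff_sum n (g m) =
  binom_diff_sum n (fun j => \sum_(0 <= m < M) g m j).
Proof.
rewrite /binom_diff_sum exchange_big; apply: eq_bigr => k _.
by rewrite -mulr_sumr sumrB -!mulr_sumr.
Qed.

End BinomialSums.

Section Telescoping.
Variables (R : fieldType) (q : R).

Definition compl_geom n (t : R) : R := \sum_(j < n) (1 - t) ^+ j.

Lemma mulr_compl_geom n t : t * compl_geom n t = 1 - (1 - t) ^+ n.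
Proof.
elim: n => [|n IH]; first by rewrite /compl_geom big_ord0 mulr0 expr0 subrr.
by rewrite /compl_geom big_ord_recr /= mulrDr -/(compl_geom n t) IH exprS; ring.
Qed.

Definition lrmax_tel n (t : R) : R :=
  (q * compl_geom n t + (1 - t) ^+ n + n%:R * t) / (1 - q).

Lemma pos_mass_split n m : q != 0 -> q != 1 ->
  pos_mass q n m.+1 = binom_diff_sum n (fun j => (q ^+ m) ^+ j)
    + (lrmax_tel n (q ^+ m) - lrmax_tel n (q ^+ m.+1)).
Proof.
move=> q_neq0 q_neq1; have onemq_neq0 : 1 - q != 0 by rewrite subr_eq0 eq_sym.
apply: (mulfI (mulf_neq0 onemq_neq0 (expf_neq0 m q_neq0))).
rewrite pos_mass_closed exprS /lrmax_tel; set t := q ^+ m.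
transitivity ((1 - q) * (t * binom_diff_sum n (fun j => t ^+ j))
    + q * (t * compl_geom n t) - (q * t) * compl_geom n (q * t)
    + t * ((1 - t) ^+ n - (1 - q * t) ^+ n) + n%:R * t ^+ 2 * (1 - q)).
  by rewrite mulr_binom_diff_sum_pow !mulr_compl_geom; ring.
by field; exact: onemq_neq0.
Qed.

Lemma lrmax_tel1B0 n : q != 1 -> (0 < n)%N ->
  lrmax_tel n 1 - lrmax_tel n 0 = n%:R - 1.
Proof.
move=> q_neq1 n_gt0; have onemq_neq0 : 1 - q != 0 by rewrite subr_eq0 eq_sym.
have compl_geom1 : compl_geom n 1 = 1.
  by rewrite -[LHS]mul1r mulr_compl_geom subrr expr0n gtn_eqF // subr0.
have compl_geom0 : compl_geom n 0 = n%:R.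
  rewrite /compl_geom subr0 (eq_bigr (fun=> 1)) ?sumr_const ?card_ord //.
  by move=> j _; rewrite expr1n.
rewrite /lrmax_tel compl_geom1 compl_geom0 subrr expr0n gtn_eqF // subr0 expr1n.
by rewrite addr0; field; exact: onemq_neq0.
Qed.

Lemma binom_diff_sum_invB n : q != 0 ->
  (forall j, (0 < j)%N -> q ^+ j != 1) -> (0 < n)%N ->
  binom_diff_sum n (fun j => (1 - q ^+ j)^-1) + (n%:R - 1) =
  binom_diff_sum n (fun j => (q^-1 ^+ j - 1)^-1).
Proof.
move=> q_neq0 qj_neq1 n_gt0.
rewrite (@eq_binom_diff_sum _ n _ (fun j => (q^-1 ^+ j - 1)^-1 + 1)).
  by rewrite binom_diff_sum_add1 // subrK.
move=> j j_gt0; have qj_neq0 := expf_neq0 j q_neq0.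
have onemqj_neq0 : 1 - q ^+ j != 0 by rewrite subr_eq0 eq_sym qj_neq1.
by rewrite exprVn; field; rewrite qj_neq0 mulN1r.
Qed.

End Telescoping.

Local Open Scope classical_set_scope.

Lemma cvg_binom_diff_sum (R : numFieldType) n (g : nat -> nat -> R)
    (l : nat -> R) :
  (forall j, (0 < j)%N -> (fun M => g M j) @ \oo --> l j) ->
  (fun M => binom_diff_sum n (g M)) @ \oo --> binom_diff_sum n l.
Proof.
move=> cvg_g; rewrite /binom_diff_sum big_nat; under eq_cvg do rewrite big_nat.
apply: cvg_big => [|k /andP[k_ge2 _]]; first exact: add_continuous.
apply: cvgM; first exact: cvg_cst.
apply: cvgB; apply: cvgM; (try exact: cvg_cst).
  all: by apply: cvg_g; case: k k_ge2 => [|[]].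
Qed.

Section Limits.
Variables (R : realType) (q : R).
Hypotheses (q_gt0 : 0 < q) (q_lt1 : q < 1).

Lemma cvg_sum_geometric_pow j : (0 < j)%N ->
  (fun M => \sum_(0 <= m < M) (q ^+ m) ^+ j) @ \oo --> (1 - q ^+ j)^-1.
Proof.
move=> j_gt0; have qj_lt1 : `|q ^+ j| < 1.
  by rewrite normrX ger0_norm ?ltW // exprn_ilt1 ?ltW // -lt0n.
have := cvg_geometric_series (a := 1) qj_lt1; rewrite div1r.
apply: cvg_trans; apply: near_eq_cvg; apply: nearW => M.
by rewrite seriesEnat /=; apply: eq_bigr => m _; rewrite mul1r exprAC.
Qed.

Lemma continuous_lrmax_tel n : continuous (lrmax_tel q n).
Proof.
have -> : lrmax_tel q n = horner ((q%:P * \sum_(j < n) (1 - 'X) ^+ j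
    + (1 - 'X) ^+ n + n%:R%:P * 'X) * (1 - q)^-1%:P).
  apply: funext => t; rewrite /lrmax_tel /compl_geom !hornerE horner_sum.
  by under [in RHS]eq_bigr do rewrite !hornerE.
exact: continuous_horner.
Qed.

Lemma cvg_sum_pos_mass n : (0 < n)%N ->
  (fun M => \sum_(0 <= m < M) pos_mass q n m.+1) @ \oo -->
  binom_diff_sum n (fun j => (1 - q ^+ j)^-1) + (n%:R - 1).
Proof.
move=> n_gt0; have q_neq0 : q != 0 by rewrite gt_eqF.
have q_neq1 : q != 1 by rewrite lt_eqF.
have q_norm_lt1 : `|q| < 1 by rewrite ger0_norm ?ltW.
have sumE M : \sum_(0 <= m < M) pos_mass q n m.+1 =
    binom_diff_sum n (fun j => \sum_(0 <= m < M) (q ^+ m) ^+ j)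
    + (lrmax_tel q n 1 - lrmax_tel q n (q ^+ M)).
  under eq_bigr do rewrite pos_mass_split //.
  rewrite big_split /= sum_binom_diff_sum -opprB -(expr0 q).
  rewrite -(telescope_sumr (fun k => lrmax_tel q n (q ^+ k)) (leq0n M)) -sumrN.
  by under [in RHS]eq_bigr do rewrite opprB.
rewrite (funext sumE) -(lrmax_tel1B0 q_neq1 n_gt0).
apply: cvgD; first exact/cvg_binom_diff_sum/cvg_sum_geometric_pow.
apply: cvgB; first exact: cvg_cst.
apply: (cvg_comp _ _ (cvg_expr q_norm_lt1)); exact: continuous_lrmax_tel.
Qed.

End Limits.

Lemma esum_cvg_exhaustion (R : realType) (T : choiceType) (D : set T)
    (f : T -> R) (B : nat -> seq T) (bound : T -> nat) (l : R) :
  (forall x, D x -> 0 <= f x) ->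
  (forall M, uniq (B M)) ->
  (forall M x, x \in B M -> D x) ->
  (forall M x, D x -> (bound x <= M)%N -> x \in B M) ->
  (fun M => \sum_(x <- B M) f x) @ \oo --> l ->
  \esum_(x in D) (f x)%:E = l%:E.
Proof.
move=> f_ge0 uniq_B B_D bound_B cvg_B.
have sum_B M : \sum_(x \in [set` B M]) (f x)%:E = (\sum_(x <- B M) f x)%:E.
  by rewrite -fsbig_seq // sumEFin.
apply/eqP; rewrite eq_le; apply/andP; split.
  apply: ge_ereal_sup => _ [X [finX XD] <-].
  have [s Xs] := (finite_seqP X).1 finX.
  rewrite fsumEFin // lee_fin; apply: ler_cvg_to (cvg_cst _) cvg_B _.
  exists (\max_(x <- s) bound x)%N => // M /= le_sM.
  rewrite -lee_fin -fsumEFin // -sum_B.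
  apply: (lee_fsum_nneg_subset finX (finite_seq _)).
    move=> x /set_mem Xx; apply/mem_set/bound_B; first exact: XD.
    by apply: leq_trans le_sM; apply: leq_bigmax_seq => //; rewrite Xs in Xx.
  by move=> x /andP[_ /set_mem /B_D /f_ge0]; rewrite lee_fin.
have le_esum M : ((\sum_(x <- B M) f x)%:E <= \esum_(x in D) (f x)%:E)%E.
  rewrite -sum_B; apply: esum_ge; exists [set` B M] => //.
  by split => [|x /B_D]; [exact: finite_seq|].
have : (0 <= \esum_(x in D) (f x)%:E)%E.
  by apply: esum_ge0 => x /f_ge0; rewrite lee_fin.
move: le_esum; case: (\esum_(x in D) _) => [r | | ] le_esum // _.
  rewrite lee_fin; apply: (ler_cvg_to cvg_B (cvg_cst r)).
  by apply: nearW => M; rewrite -lee_fin.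
by rewrite leey.
Qed.

Lemma F_exp_seqE (R : realType) (q : R) n :
  F_exp q n = \esum_(s in [set s | size s = n /\ all (fun a => 0 < a)%N s])
                (word_wt q s * (lrmax_pos s)%:R)%:E.
Proof.
rewrite /F_exp.
rewrite (reindex_esum (@pos_word n) _ (fun w : n.-tuple nat => tval w)) //.
split => [w /= pos_w | w1 w2 _ _ /val_inj // | s [size_s pos_s]].
  by split; [exact: size_tuple | exact: pos_w].
have size_sn : size s == n by rewrite size_s.
by exists (Tuple size_sn).
Qed.

Theorem mainTheorem5 (R : realType) (q : R) (n : nat) :
  0 < q -> q < 1 -> (2 <= n)%N ->
  F_exp q n =
  (\sum_(2 <= k < n.+1)
     'C(n, k)%:R * (-1) ^+ k *
     ((k.-1)%:R / (q^-1 ^+ k.-1 - 1) - k%:R / (q^-1 ^+ k - 1)))%:E.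
Proof.
move=> q_gt0 q_lt1 n_ge2; have n_gt0 := ltnW n_ge2.
have qj_neq1 j : (0 < j)%N -> q ^+ j != 1.
  by move=> j_gt0; rewrite lt_eqF // exprn_ilt1 // ?(ltW q_gt0) -?lt0n.
rewrite -[X in _ = X%:E]/(binom_diff_sum n (fun j => (q^-1 ^+ j - 1)^-1)).
rewrite -binom_diff_sum_invB ?gt_eqF // F_exp_seqE.
apply: (esum_cvg_exhaustion (B := box_words n) (bound := wmax)).
- by move=> s _; rewrite mulr_ge0 // word_wt_ge0 // ltW.
- exact: uniq_box_words.
- by move=> M s; rewrite mem_box_words => /and3P[/eqP size_s pos_s _].
- by move=> M s [size_s pos_s] le_sM; rewrite mem_box_words size_s eqxx pos_s.
under eq_cvg do rewrite sum_word_wt_lrmax_pos1.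
exact: cvg_sum_pos_mass.
Qed.
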